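(* Let $n\in\mathbb N$, let $H_1,\dots,H_n$ be BF-monoids, and let $H=H_1\times\dots\times H_n$. Then (1) $\mathcal R(H)=\bigcup_{i=1}^n\mathcal R(H_i)$; (2) $\operatorname{Ca}(H)=\bigcup_{i=1}^n\operatorname{Ca}(H_i)$; (3) $\daleth^*(H)=\bigcup_{i=1}^n\daleth^*(H_i)$.
   Context: A monoid is a commutative cancellative semigroup with identity; $H_{\mathrm{red}}=H/H^\times$, $\mathcal A(H)$ its atoms. For $a\in H$, $\mathsf Z(a)$ is the set of factorizations of $a$ (elements of the free abelian monoid on $\mathcal A(H_{\mathrm{red}})$ multiplying to $aH^\times$), $|z|$ the number of atoms in $z$, $\mathsf L(a)=\{|z|:z\in\mathsf Z(a)\}$. $H$ is a BF-monoid if $\mathsf L(a)$ is finite and nonempty for all $a\in H$. $\daleth^*(H) = \{\min(\mathsf L(uv)\setminus\{2\}) : u,v \in \mathcal A(H),\ |\mathsf L(uv)|>1\}$. Distance: writing $z = u_1\cdots u_k v_1\cdots v_\ell$, $z'=u_1\cdots u_k w_1\cdots w_m$ with no $v_i$ equal to any $w_j$, $\mathsf d(z,z')=\max\{\ell,m\}$. An $N$-chain from $z$ to $z'$ in $\mathsf Z(a)$ is a sequence $z=z_0,\dots,z_n=z'$ in $\mathsf Z(a)$ with $\mathsf d(z_{i-1},z_i)\le N$. $\mathsf c(a)$ is the least $N$ such that any two factorizations of $a$ are connected by an $N$-chain; $\operatorname{Ca}(H)=\{\mathsf c(a): a\in H,\ |\mathsf Z(a)|>1\}$. $\mathcal R(H)$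 is the set of $d\in\mathbb N_{\ge2}$ such that some $a\in H$ has distinct $z,z'\in\mathsf Z(a)$ with $\mathsf d(z,z')=d$ not connected by any $(d-1)$-chain. *)

From Stdlib Require Import List Arith Lia FunctionalExtensionality.
Import ListNotations.

Set Implicit Arguments.

Record monoid := Monoid {
  car :> Type;
  mul : car -> car -> car;
  one : car;
  mulA : forall a b c, mul a (mul b c) = mul (mul a b) c;
  mulC : forall a b, mul a b = mul b a;
  mul1 : forall a, mul one a = a;
  mulK : forall a b c, mul a b = mul a c -> b = c }.

Section Factorizations.
Variable M : monoid.

Definition is_unit (u : M) : Prop := exists v, mul M u v = one M.

Definition associated (a b : M) : Prop := exists e, is_unit e /\ a = mul M b e.

Definition atom (u : M) : Prop :=
  ~ is_unit u /\ forall b c, u = mul M b c -> is_unit b \/ is_unit c.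

Definition lprod (z : list M) : M := fold_right (mul M) (one M) z.

(* Two lists of atoms represent the same element of the free abelian monoid on
   A(H_red) iff they agree up to permutation and associates. *)
Inductive perm_assoc : list M -> list M -> Prop :=
  | pa_nil : perm_assoc [] []
  | pa_cons (x y : M) (l l1 l2 : list M) :
      associated x y -> perm_assoc l (l1 ++ l2) ->
      perm_assoc (x :: l) (l1 ++ y :: l2).

(* z (a list of atoms of H, read as the element of the free abelian monoid on
   A(H_red) formed by their classes) is a factorization of a. *)
Definition factorization (a : M) (z : list M) : Prop :=
  Forall atom z /\ associated (lprod z) a.

Definition in_L (a : M) (k : nat) : Prop :=
  exists z, factorization a z /\ length z = k.

Definition BF : Prop :=
  forall a : M, (exists k, in_L a k) /\ (exists N, forall k, in_L a k -> k <= N).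

(* d(z,z') <= N : z = c v, z' = c w with |v|,|w| <= N (the minimum over such
   splittings is attained at c = gcd(z,z'), giving the paper's d). *)
Definition dist_le (z z' : list M) (N : nat) : Prop :=
  exists c v w, perm_assoc z (c ++ v) /\ perm_assoc z' (c ++ w) /\
                length v <= N /\ length w <= N.

Definition dist (z z' : list M) (d : nat) : Prop :=
  dist_le z z' d /\ forall N, dist_le z z' N -> d <= N.

Inductive chain (a : M) (N : nat) : list M -> list M -> Prop :=
  | chain_refl z : factorization a z -> chain a N z z
  | chain_step z y z' : factorization a z -> dist_le z y N ->
      chain a N y z' -> chain a N z z'.

Definition catenary_le (a : M) (N : nat) : Prop :=
  forall z z', factorization a z -> factorization a z' -> chain a N z z'.

Definition catenary (a : M) (N : nat) : Prop :=
  catenary_le a N /\ forall K, catenary_le a K -> N <= K.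

Definition many_fact (a : M) : Prop :=
  exists z z', factorization a z /\ factorization a z' /\ ~ perm_assoc z z'.

Definition Ca (c : nat) : Prop := exists a, many_fact a /\ catenary a c.

Definition Rset (d : nat) : Prop :=
  2 <= d /\ exists a z z', factorization a z /\ factorization a z' /\
    ~ perm_assoc z z' /\ dist z z' d /\ ~ chain a (d - 1) z z'.

Definition daleth_star (m : nat) : Prop :=
  exists u v, atom u /\ atom v /\
    (exists k l, in_L (mul M u v) k /\ in_L (mul M u v) l /\ k <> l) /\
    in_L (mul M u v) m /\ m <> 2 /\
    forall k, in_L (mul M u v) k -> k <> 2 -> m <= k.

End Factorizations.

Definition idx (n : nat) := {i : nat | i < n}.

Section Product.
Variable n : nat.
Variable H : idx n -> monoid.

Definition pcar := forall i, car (H i).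
Definition pmul (a b : pcar) : pcar := fun i => mul (H i) (a i) (b i).
Definition pone : pcar := fun i => one (H i).

Lemma pmulA a b c : pmul a (pmul b c) = pmul (pmul a b) c.
Proof. apply functional_extensionality_dep; intro i; apply mulA. Qed.
Lemma pmulC a b : pmul a b = pmul b a.
Proof. apply functional_extensionality_dep; intro i; apply mulC. Qed.
Lemma pmul1 a : pmul pone a = a.
Proof. apply functional_extensionality_dep; intro i; apply mul1. Qed.
Lemma pmulK a b c : pmul a b = pmul a c -> b = c.
Proof.
  intro E; apply functional_extensionality_dep; intro i.
  apply (@mulK (H i) (a i)). exact (f_equal (fun f => f i) E).
Qed.

Definition prod_monoid : monoid := @Monoid pcar pmul pone pmulA pmulC pmul1 pmulK.
End Product.

(** An atom of [H_1 x ... x H_n] has exactly one non-unit coordinate, which is an atom of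
    that factor. Hence a factorization [z] of [a = (a_i)] is, up to associates and order,
    the disjoint union of factorizations [coord i z] of the coordinates [a_i]; projecting
    to a coordinate maps chains to chains without increasing distances, and conversely a
    chain in one coordinate lifts to a chain in [H] that leaves the other coordinates
    untouched, so chains in all coordinates can be assembled one coordinate at a time.
    Thus two factorizations are joined by an [N]-chain iff all their coordinates are, which
    gives [R(H)] and [c(a) = max_i c(a_i)], and hence [Ca(H)]. For [daleth^*(H)], two atoms
    in the same factor behave as in that factor, while for atoms [u], [v] in different
    factors [L(uv) = {2}]. *)

From Stdlib Require Import List Arith Lia FunctionalExtensionality Permutation.
From Stdlib Require Import ClassicalEpsilon Classical Eqdep_dec.
Import ListNotations.
Set Implicit Arguments.

Arguments mul {m} _ _.
Arguments mulA {m} a b c.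
Arguments mulC {m} a b.
Arguments mul1 {m} a.
Arguments is_unit {M} u.
Arguments associated {M} a b.
Arguments atom {M} u.
Arguments lprod {M} z.
Arguments perm_assoc {M} _ _.
Arguments factorization {M} a z.
Arguments in_L {M} a k.
Arguments dist_le {M} z z' N.
Arguments chain {M} a N _ _.
Arguments catenary_le {M} a N.
Arguments catenary {M} a N.
Arguments many_fact {M} a.

Section MonoidTheory.
Context {M : monoid}.
Notation "x * y" := (@mul M x y).
Implicit Types (a b c d e : M) (l m z y w : list M).

Lemma mulr1 a : a * one M = a.
Proof. rewrite mulC; apply mul1. Qed.

Lemma unit_one : is_unit (one M).
Proof. exists (one M); apply mul1. Qed.

Lemma unit_mul a b : is_unit a -> is_unit b -> is_unit (a * b).
Proof.
  intros [x Hx] [y Hy]; exists (x * y).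
  rewrite <- mulA, (mulA b x y), (mulC b x), <- (mulA x b y), Hy, mulr1; exact Hx.
Qed.

Lemma unit_mul_l a b : is_unit (a * b) -> is_unit a.
Proof. intros [x Hx]; exists (b * x); rewrite mulA; exact Hx. Qed.

Lemma unit_mul_r a b : is_unit (a * b) -> is_unit b.
Proof. rewrite mulC; apply unit_mul_l. Qed.

Lemma unit_lprod l : (forall x, In x l -> is_unit x) -> is_unit (lprod l).
Proof. induction l; simpl; intros h; [apply unit_one | apply unit_mul; auto]. Qed.

Lemma assoc_refl a : associated a a.
Proof. exists (one M); split; [apply unit_one | symmetry; apply mulr1]. Qed.

Lemma assoc_sym a b : associated a b -> associated b a.
Proof.
  intros [e [[f Hf] He]]; exists f; split.
  - exists e; rewrite mulC; exact Hf.
  - rewrite He, <- mulA, Hf, mulr1; reflexivity.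
Qed.

Lemma assoc_trans a b c : associated a b -> associated b c -> associated a c.
Proof.
  intros [e [He E1]] [f [Hf E2]]; exists (f * e); split.
  - apply unit_mul; assumption.
  - rewrite E1, E2, mulA; reflexivity.
Qed.

Lemma assoc_mul a b c d : associated a b -> associated c d -> associated (a * c) (b * d).
Proof.
  intros [e [He E1]] [f [Hf E2]]; exists (e * f); split.
  - apply unit_mul; assumption.
  - subst; rewrite <- !mulA; f_equal. rewrite (mulC e), <- !mulA, (mulC f); reflexivity.
Qed.

Lemma assoc_mul_unit a e : is_unit e -> associated (a * e) a.
Proof. intros He; exists e; split; auto. Qed.

Lemma assoc_unit a b : associated a b -> is_unit b -> is_unit a.
Proof. intros [e [He E]] Hb; subst; apply unit_mul; assumption. Qed.

Lemma assoc_units a b : is_unit a -> is_unit b -> associated a b.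
Proof.
  intros Ha [y Hy]; exists (y * a); split.
  - apply unit_mul; [exists b; rewrite mulC; exact Hy | exact Ha].
  - rewrite mulA, Hy, mul1; reflexivity.
Qed.

Lemma atom_not_unit a : atom a -> ~ is_unit a.
Proof. intros [h _]; exact h. Qed.

Lemma lprod_app l m : lprod (l ++ m) = lprod l * lprod m.
Proof.
  induction l; simpl; [symmetry; apply mul1 | rewrite IHl, mulA; reflexivity].
Qed.

Lemma perm_assocE l m :
  perm_assoc l m <-> exists m', Forall2 associated l m' /\ Permutation m' m.
Proof.
  split.
  - induction 1 as [| x y l l1 l2 Hxy _ [m' [F P]]].
    + exists []; split; constructor.
    + exists (y :: m'); split; [constructor; assumption | apply Permutation_cons_app; exact P].
  - intros [m' [F P]]; revert m P; induction F as [| x y l m' Hxy F IH]; intros m P.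
    + apply Permutation_nil in P; subst; constructor.
    + assert (Hin : In y m) by (apply (Permutation_in _ P); left; reflexivity).
      apply in_split in Hin as [l1 [l2 E]]; subst.
      constructor; [assumption | apply IH; eapply Permutation_cons_app_inv; exact P].
Qed.

Lemma Forall2_assoc_sym l m : Forall2 associated l m -> Forall2 associated m l.
Proof. induction 1; constructor; auto using assoc_sym. Qed.

Lemma Forall2_assoc_trans l m k :
  Forall2 associated l m -> Forall2 associated m k -> Forall2 associated l k.
Proof.
  intros F; revert k; induction F; intros k G; inversion G; subst; constructor;
    eauto using assoc_trans.
Qed.

Lemma perm_assoc_refl l : perm_assoc l l.
Proof.
  apply perm_assocE; exists l; split; [| apply Permutation_refl].
  induction l; constructor; auto using assoc_refl.
Qed.

Lemma perm_assoc_sym l m : perm_assoc l m -> perm_assoc m l.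
Proof.
  rewrite !perm_assocE; intros [m' [F P]].
  destruct (Permutation_Forall2 P (Forall2_assoc_sym F)) as [l' [P' F']].
  exists l'; split; [exact F' | apply Permutation_sym; exact P'].
Qed.

Lemma perm_assoc_trans l m k : perm_assoc l m -> perm_assoc m k -> perm_assoc l k.
Proof.
  rewrite !perm_assocE; intros [m' [F P]] [k' [G Q]].
  destruct (Permutation_Forall2 (Permutation_sym P) G) as [k'' [P' F']].
  exists k''; split; [eapply Forall2_assoc_trans; eauto |].
  eapply Permutation_trans; [apply Permutation_sym; exact P' | exact Q].
Qed.

Lemma perm_assoc_app l1 m1 l2 m2 :
  perm_assoc l1 m1 -> perm_assoc l2 m2 -> perm_assoc (l1 ++ l2) (m1 ++ m2).
Proof.
  rewrite !perm_assocE; intros [a [F P]] [b [G Q]]; exists (a ++ b); split.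
  - apply Forall2_app; assumption.
  - apply Permutation_app; assumption.
Qed.

Lemma perm_assoc_length l m : perm_assoc l m -> length l = length m.
Proof. induction 1; simpl; auto. rewrite length_app in *; simpl; lia. Qed.

Lemma perm_assoc_cons_inv x l m : perm_assoc (x :: l) m ->
  exists m1 b m2, m = m1 ++ b :: m2 /\ associated x b /\ perm_assoc l (m1 ++ m2).
Proof. intros h; inversion h; subst; eauto 6. Qed.

Lemma factorization_atoms a z : factorization a z -> Forall atom z.
Proof. intros [F _]; exact F. Qed.

Lemma factorization_not_units a z : factorization a z -> Forall (fun x => ~ is_unit x) z.
Proof. intros [F _]; eapply Forall_impl; [| exact F]; apply atom_not_unit. Qed.

Lemma factorization_unit a z : factorization a z -> is_unit a -> z = [].
Proof.
  intros [F A] U; destruct z as [| x z]; auto; exfalso.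
  inversion F; subst; apply (atom_not_unit H1).
  apply (@unit_mul_l x (lprod z)); eapply assoc_unit; eauto.
Qed.

Lemma factorization_atom a z : factorization a z -> atom a -> length z = 1.
Proof.
  intros [F A] Aa; destruct z as [| x [| y z]]; auto; exfalso.
  - apply (atom_not_unit Aa); eapply assoc_unit; [apply assoc_sym; exact A | apply unit_one].
  - inversion F as [| ? ? Ax F']; inversion F' as [| ? ? Ay _]; subst.
    destruct (assoc_sym A) as [e [He E]]; simpl in E.
    destruct (proj2 Aa x ((y * lprod z) * e)) as [h | h].
    + rewrite E, <- mulA; reflexivity.
    + exact (atom_not_unit Ax h).
    + apply (atom_not_unit Ay); do 2 eapply unit_mul_l; exact h.
Qed.

Lemma dist_le_perm_assoc z y : perm_assoc z y -> dist_le z y 0.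
Proof.
  intros P; exists z, [], []; rewrite app_nil_r.
  repeat split; auto using perm_assoc_refl, perm_assoc_sym.
Qed.

Lemma dist_le_0 z y : dist_le z y 0 -> perm_assoc z y.
Proof.
  intros [c [[| ? v] [[| ? w] [P1 [P2 [L1 L2]]]]]]; simpl in *; try lia.
  rewrite app_nil_r in *; eapply perm_assoc_trans; [exact P1 | apply perm_assoc_sym; exact P2].
Qed.

Lemma dist_le_mono z y N K : dist_le z y N -> N <= K -> dist_le z y K.
Proof.
  intros [c [v [w [P1 [P2 [L1 L2]]]]]] h; exists c, v, w; repeat split; auto; lia.
Qed.

Lemma chain_trans a N z y w : chain a N z y -> chain a N y w -> chain a N z w.
Proof. induction 1; intros; auto. eapply chain_step; eauto. Qed.

Lemma chain_mono a N K z y : chain a N z y -> N <= K -> chain a K z y.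
Proof.
  induction 1; intros; [constructor; auto | eapply chain_step; eauto using dist_le_mono].
Qed.

Lemma chain_of_dist_le a N z y :
  factorization a z -> factorization a y -> dist_le z y N -> chain a N z y.
Proof. intros Fz Fy D; eapply chain_step; [exact Fz | exact D | constructor; exact Fy]. Qed.

Lemma chain_perm_assoc a N z y :
  factorization a z -> factorization a y -> perm_assoc z y -> chain a N z y.
Proof.
  intros Fz Fy P; apply chain_of_dist_le; auto.
  eapply dist_le_mono; [apply dist_le_perm_assoc; exact P | lia].
Qed.

Lemma chain_0 a z y : chain a 0 z y -> perm_assoc z y.
Proof.
  induction 1; [apply perm_assoc_refl |].
  eapply perm_assoc_trans; [apply dist_le_0; eauto | auto].
Qed.

Lemma catenary_le_0 a : ~ many_fact a -> catenary_le a 0.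
Proof.
  intros nm z z' Fz Fz'; apply chain_perm_assoc; auto.
  apply NNPP; intro np; apply nm; exists z, z'; auto.
Qed.

Lemma catenary_le_unit a N : is_unit a -> catenary_le a N.
Proof.
  intros U z z' Fz Fz'; apply chain_perm_assoc; auto.
  rewrite (factorization_unit Fz U), (factorization_unit Fz' U); constructor.
Qed.

Lemma catenary_le_pred a N : 1 <= N -> catenary_le a N ->
  ~ (many_fact a /\ catenary a N) -> catenary_le a (N - 1).
Proof.
  intros N1 HN hno z z' Fz Fz'.
  destruct (classic (many_fact a)) as [hm | nm].
  2: apply chain_mono with 0; [apply catenary_le_0 | lia]; auto.
  apply NNPP; intro hch; apply hno; split; [exact hm | split; [exact HN |]].
  intros K HK; apply NNPP; intro hK; apply hch.
  apply chain_mono with K; [apply HK; auto | lia].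
Qed.

End MonoidTheory.

Definition daleth_of_lengths (L : nat -> Prop) (m : nat) : Prop :=
  (exists k1 k2, L k1 /\ L k2 /\ k1 <> k2) /\ L m /\ m <> 2 /\ forall k, L k -> k <> 2 -> m <= k.

Lemma daleth_of_lengths_ext (L L' : nat -> Prop) m :
  (forall k, L k <-> L' k) -> daleth_of_lengths L m -> daleth_of_lengths L' m.
Proof.
  intros E [[k1 [k2 [hk1 [hk2 hk]]]] [hm [hm2 hmin]]]; rewrite E in hk1, hk2, hm.
  split; [exists k1, k2; auto | repeat split; auto; intros j hj; apply hmin, E, hj].
Qed.

Lemma daleth_starE (M : monoid) m :
  daleth_star M m <-> exists u v : M, atom u /\ atom v /\ daleth_of_lengths (in_L (mul u v)) m.
Proof. reflexivity. Qed.

Lemma filter_lprod_assoc (A : Type) (M : monoid) (f : A -> car M) (Q : A -> bool) (z : list A) :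
  (forall p, In p z -> Q p = false -> is_unit (f p)) ->
  associated (lprod (map f z)) (lprod (map f (filter Q z))).
Proof.
  induction z as [| x t IH]; intros h; simpl; [apply assoc_refl |].
  assert (IH' : associated (lprod (map f t)) (lprod (map f (filter Q t))))
    by (apply IH; intros; apply h; [right |]; auto).
  destruct (Q x) eqn:E; simpl; [apply assoc_mul; [apply assoc_refl | exact IH'] |].
  eapply assoc_trans; [| exact IH']; rewrite mulC; apply assoc_mul_unit, h; [left |]; auto.
Qed.

Lemma dependent_choice (A : Type) (B : A -> Type) (R : forall a, B a -> Prop) :
  (forall a, exists b, R a b) -> exists f : forall a, B a, forall a, R a (f a).
Proof.
  intros h; exists (fun a => proj1_sig (constructive_indefinite_description _ (h a))).
  intros a; apply proj2_sig.
Qed.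

Section Product.
Variable n : nat.
Variable H : idx n -> monoid.
Notation P := (prod_monoid H).
Implicit Types (p q : car P) (z y : list (car P)) (i j : idx n).

Lemma idx_eq_val i j : proj1_sig i = proj1_sig j -> i = j.
Proof. destruct i, j; simpl; intros; subst; f_equal; apply le_unique. Qed.

Definition idx_eq_dec i j : {i = j} + {i <> j}.
Proof.
  destruct (Nat.eq_dec (proj1_sig i) (proj1_sig j)) as [e | e];
    [left; apply idx_eq_val, e | right; intros E; subst; contradiction].
Defined.

Lemma mul_at p q i : (@mul P p q) i = mul (p i) (q i).
Proof. reflexivity. Qed.

Definition upd p i (x : car (H i)) : car P :=
  fun j => match idx_eq_dec i j with
           | left e => eq_rect i (fun k => car (H k)) x j e
           | right _ => p j
           end.

Lemma upd_same p i x : upd p i x i = x.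
Proof.
  unfold upd; destruct (idx_eq_dec i i) as [e | ne]; [| contradiction].
  rewrite (UIP_dec idx_eq_dec e eq_refl); reflexivity.
Qed.

Lemma upd_other p i x j : i <> j -> upd p i x j = p j.
Proof. unfold upd; destruct (idx_eq_dec i j); [contradiction | reflexivity]. Qed.

Definition embed i (x : car (H i)) : car P := upd (one P) i x.

Lemma embed_same i x : embed i x i = x.
Proof. apply upd_same. Qed.

Lemma embed_other i x j : i <> j -> embed i x j = one (H j).
Proof. intros; unfold embed; rewrite upd_other; auto. Qed.

Lemma unit_prod p : is_unit p <-> forall i, is_unit (p i).
Proof.
  split; [intros [v Hv] i; exists (v i); exact (f_equal (fun f => f i) Hv) |].
  intros h.
  destruct (@dependent_choice _ (fun i => car (H i)) (fun i v => mul (p i) v = one (H i)) h)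
    as [v Hv].
  exists v; apply functional_extensionality_dep; exact Hv.
Qed.

Lemma assoc_prod p q : associated p q <-> forall i, associated (p i) (q i).
Proof.
  split.
  - intros [e [He E]] i; exists (e i); split; [apply unit_prod; auto |].
    exact (f_equal (fun f => f i) E).
  - intros h.
    destruct (@dependent_choice _ (fun i => car (H i))
                (fun i e => is_unit e /\ p i = mul (q i) e) h) as [e He].
    exists e; split; [apply unit_prod; intro i; apply He |].
    apply functional_extensionality_dep; intro i; apply He.
Qed.

Lemma atom_prod p : atom p <-> exists i, atom (p i) /\ forall j, j <> i -> is_unit (p j).
Proof.
  split.
  - intros [nu hat].
    assert (exists i, ~ is_unit (p i)) as [i hi]
      by (apply not_all_ex_not; intro h; apply nu, unit_prod; exact h).
    assert (Hsplit : forall x y : car (H i), p i = mul x y ->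
              p = @mul P (embed i x) (upd p i y)).
    { intros x y E; apply functional_extensionality_dep; intro k; rewrite mul_at.
      destruct (idx_eq_dec i k) as [e | ne].
      - subst k; rewrite embed_same, upd_same; exact E.
      - rewrite embed_other, upd_other, mul1; auto. }
    exists i; split.
    + split; auto; intros x y E.
      destruct (hat _ _ (Hsplit x y E)) as [h | h]; apply unit_prod with (i := i) in h;
        [left; rewrite embed_same in h | right; rewrite upd_same in h]; exact h.
    + intros j ne; apply NNPP; intro hj.
      destruct (hat _ _ (Hsplit (p i) (one (H i)) (eq_sym (mulr1 (p i))))) as [h | h].
      * apply unit_prod with (i := i) in h; rewrite embed_same in h; contradiction.
      * apply unit_prod with (i := j) in h; rewrite upd_other in h; auto.
  - intros [i [ai hj]]; split.
    + intros h; apply unit_prod with (i := i) in h; exact (atom_not_unit ai h).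
    + intros b c E.
      assert (Ei : p i = mul (b i) (c i)) by (rewrite E; reflexivity).
      destruct (proj2 ai _ _ Ei) as [h | h]; [left | right]; apply unit_prod; intro k;
        (destruct (idx_eq_dec k i) as [e | ne]; [subst; exact h |]);
        assert (Ek : is_unit (p k)) by auto; rewrite E, mul_at in Ek;
        [eapply unit_mul_l | eapply unit_mul_r]; exact Ek.
Qed.

Definition nonunit_at i p : bool :=
  if excluded_middle_informative (is_unit (p i)) then false else true.

Lemma nonunit_at_true i p : nonunit_at i p = true <-> ~ is_unit (p i).
Proof.
  unfold nonunit_at; destruct excluded_middle_informative; split; intros; auto; congruence.
Qed.

Lemma nonunit_at_false i p : nonunit_at i p = false <-> is_unit (p i).
Proof.
  unfold nonunit_at; destruct excluded_middle_informative; split; intros; auto;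
    [congruence | contradiction].
Qed.

Lemma atom_nonunit_at p : atom p -> exists i, nonunit_at i p = true.
Proof.
  intros h; apply atom_prod in h as [i [ai _]]; exists i.
  apply nonunit_at_true, atom_not_unit, ai.
Qed.

Lemma atom_nonunit_at_spec p i : atom p -> nonunit_at i p = true ->
  atom (p i) /\ forall j, j <> i -> is_unit (p j).
Proof.
  intros h hi; apply atom_prod in h as [t [ta ht]]; apply nonunit_at_true in hi.
  destruct (idx_eq_dec i t); [subst; auto | exfalso; apply hi, ht; auto].
Qed.

Lemma atom_nonunit_at_unique p i j : atom p ->
  nonunit_at i p = true -> nonunit_at j p = true -> i = j.
Proof.
  intros h hi hj; apply nonunit_at_true in hj.
  destruct (idx_eq_dec j i) as [e | ne]; auto.
  exfalso; apply hj, (proj2 (atom_nonunit_at_spec i h hi)), ne.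
Qed.

Lemma atom_nonunit_at_other p i j : atom p -> nonunit_at i p = true -> i <> j ->
  nonunit_at j p = false.
Proof.
  intros h hi ne; destruct (nonunit_at j p) eqn:hj; auto.
  exfalso; apply ne; exact (atom_nonunit_at_unique i j h hi hj).
Qed.

Lemma assoc_atom_embed p i : atom p -> nonunit_at i p = true -> associated p (embed i (p i)).
Proof.
  intros h hi; apply assoc_prod; intro k.
  destruct (idx_eq_dec i k) as [e | ne].
  - subst k; rewrite embed_same; apply assoc_refl.
  - rewrite embed_other; auto.
    apply assoc_units; [apply (proj2 (atom_nonunit_at_spec i h hi)); auto | apply unit_one].
Qed.

Definition coord i z : list (car (H i)) := map (fun p => p i) (filter (nonunit_at i) z).

Definition others i z := filter (fun p => negb (nonunit_at i p)) z.

Lemma coord_app i z y : coord i (z ++ y) = coord i z ++ coord i y.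
Proof. unfold coord; rewrite filter_app, map_app; reflexivity. Qed.

Lemma coord_cons_in i p z : nonunit_at i p = true -> coord i (p :: z) = p i :: coord i z.
Proof. intros h; unfold coord; simpl; rewrite h; reflexivity. Qed.

Lemma coord_cons_out i p z : nonunit_at i p = false -> coord i (p :: z) = coord i z.
Proof. intros h; unfold coord; simpl; rewrite h; reflexivity. Qed.

Lemma coord_length i z : length (coord i z) <= length z.
Proof. unfold coord; rewrite length_map; apply filter_length_le. Qed.

Lemma lprod_at z i : lprod z i = lprod (map (fun p => p i) z).
Proof.
  induction z as [| x z IH]; [reflexivity |].
  change (mul (x i) (lprod z i) = mul (x i) (lprod (map (fun p => p i) z))).
  rewrite IH; reflexivity.
Qed.

Lemma atoms_coord z i : Forall atom z -> Forall atom (coord i z).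
Proof.
  intros F; apply Forall_forall; intros x hx; unfold coord in hx.
  apply in_map_iff in hx as [p [E hp]]; subst; apply filter_In in hp as [hp hb].
  exact (proj1 (atom_nonunit_at_spec i (proj1 (Forall_forall _ _) F _ hp) hb)).
Qed.

Lemma factorization_coord a z i : factorization a z -> factorization (a i) (coord i z).
Proof.
  intros [F A]; split; [apply atoms_coord; auto |].
  eapply assoc_trans; [apply assoc_sym, filter_lprod_assoc |].
  - intros p _ hb; apply nonunit_at_false; exact hb.
  - rewrite <- lprod_at; apply assoc_prod; exact A.
Qed.

Lemma perm_assoc_coord z z' i : perm_assoc z z' -> perm_assoc (coord i z) (coord i z').
Proof.
  induction 1 as [| x y l l1 l2 Hxy _ IH]; [constructor |].
  rewrite coord_app in *; apply assoc_prod with (i := i) in Hxy.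
  destruct (nonunit_at i x) eqn:Ex.
  - assert (Ey : nonunit_at i y = true).
    { apply nonunit_at_true; apply nonunit_at_true in Ex.
      intro h; apply Ex; eapply assoc_unit; eauto. }
    rewrite !coord_cons_in; auto; constructor; auto.
  - assert (Ey : nonunit_at i y = false).
    { apply nonunit_at_false; apply nonunit_at_false in Ex.
      eapply assoc_unit; [apply assoc_sym |]; eauto. }
    rewrite !coord_cons_out; auto.
Qed.

Lemma dist_le_coord z z' N i : dist_le z z' N -> dist_le (coord i z) (coord i z') N.
Proof.
  intros [c [v [w [P1 [P2 [L1 L2]]]]]]; exists (coord i c), (coord i v), (coord i w).
  rewrite <- !coord_app; repeat split; try (apply perm_assoc_coord; auto).
  - pose proof (coord_length i v); lia.
  - pose proof (coord_length i w); lia.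
Qed.

Lemma chain_coord a N z z' i : chain a N z z' -> chain (a i) N (coord i z) (coord i z').
Proof.
  induction 1; [constructor; apply factorization_coord; auto |].
  eapply chain_step; [apply factorization_coord | apply dist_le_coord |]; eauto.
Qed.

Lemma embed_mul i (x y : car (H i)) : embed i (mul x y) = @mul P (embed i x) (embed i y).
Proof.
  apply functional_extensionality_dep; intro k; rewrite mul_at.
  destruct (idx_eq_dec i k) as [e | ne].
  - subst k; rewrite !embed_same; reflexivity.
  - rewrite !embed_other, mul1; auto.
Qed.

Lemma embed_one i : embed i (one (H i)) = one P.
Proof.
  apply functional_extensionality_dep; intro k.
  destruct (idx_eq_dec i k) as [e | ne]; [subst k; apply embed_same | apply embed_other; auto].
Qed.

Lemma lprod_embed i (g : list (car (H i))) : lprod (map (embed i) g) = embed i (lprod g).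
Proof.
  induction g as [| x g IH]; [symmetry; apply embed_one |].
  change (@mul P (embed i x) (lprod (map (embed i) g)) = embed i (mul x (lprod g))).
  rewrite IH, embed_mul; reflexivity.
Qed.

Lemma unit_embed_other i (x : car (H i)) j : i <> j -> is_unit (embed i x j).
Proof. intros; rewrite embed_other; auto; apply unit_one. Qed.

Lemma atom_embed i (x : car (H i)) : atom x -> atom (embed i x).
Proof.
  intros h; apply atom_prod; exists i; rewrite embed_same; split; auto.
  intros j ne; apply unit_embed_other; auto.
Qed.

Lemma assoc_embed i (x y : car (H i)) : associated x y -> associated (embed i x) (embed i y).
Proof.
  intros h; apply assoc_prod; intro k.
  destruct (idx_eq_dec i k) as [e | ne].
  - subst k; rewrite !embed_same; auto.
  - rewrite !embed_other; auto; apply assoc_refl.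
Qed.

Lemma perm_assoc_embed i (g g' : list (car (H i))) :
  perm_assoc g g' -> perm_assoc (map (embed i) g) (map (embed i) g').
Proof.
  induction 1; simpl; [constructor |].
  rewrite map_app; simpl; constructor; [apply assoc_embed; auto | rewrite <- map_app; auto].
Qed.

Lemma factorization_embed i (x : car (H i)) g :
  factorization x g -> factorization (embed i x) (map (embed i) g).
Proof.
  intros [F A]; split.
  - apply Forall_map; eapply Forall_impl; [| exact F]; apply atom_embed.
  - rewrite lprod_embed; apply assoc_embed; exact A.
Qed.

Lemma coord_embed_same i (g : list (car (H i))) :
  Forall (fun x => ~ is_unit x) g -> coord i (map (embed i) g) = g.
Proof.
  induction 1; [reflexivity |]; cbn [map].
  rewrite coord_cons_in, embed_same, IHForall; [reflexivity |].
  apply nonunit_at_true; rewrite embed_same; auto.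
Qed.

Lemma coord_embed_other i j (g : list (car (H i))) : i <> j -> coord j (map (embed i) g) = [].
Proof.
  intros ne; induction g; [reflexivity |]; cbn [map].
  rewrite coord_cons_out; auto; apply nonunit_at_false, unit_embed_other; auto.
Qed.

Lemma factorization_replace a z i (g : list (car (H i))) :
  factorization a z -> factorization (a i) g -> factorization a (others i z ++ map (embed i) g).
Proof.
  intros [Fz Az] Fg; split.
  - apply Forall_app; split; [apply Forall_forall; intros x hx; apply filter_In in hx as [hx _];
      exact (proj1 (Forall_forall _ _) Fz _ hx) |].
    exact (proj1 (factorization_embed Fg)).
  - rewrite lprod_app, lprod_embed; apply assoc_prod; intro k; rewrite mul_at, lprod_at.
    destruct (idx_eq_dec i k) as [e | ne].
    + subst k; rewrite embed_same; eapply assoc_trans; [| exact (proj2 Fg)].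
      rewrite mulC; apply assoc_mul_unit, unit_lprod; intros x hx.
      apply in_map_iff in hx as [p [E hp]]; subst; apply filter_In in hp as [_ hp].
      apply nonunit_at_false; destruct (nonunit_at i p); simpl in *; congruence.
    + rewrite embed_other, mulr1; auto.
      eapply assoc_trans; [apply assoc_sym, filter_lprod_assoc |].
      * intros p hp hb; destruct (nonunit_at i p) eqn:E; simpl in hb; try congruence.
        apply (proj2 (atom_nonunit_at_spec i (proj1 (Forall_forall _ _) Fz _ hp) E)); auto.
      * rewrite <- lprod_at; apply assoc_prod; exact Az.
Qed.

Lemma coord_others_same i z : coord i (others i z) = [].
Proof.
  induction z as [| x z IH]; [reflexivity |]; unfold others; simpl.
  destruct (nonunit_at i x) eqn:E; simpl; [exact IH | rewrite coord_cons_out; auto].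
Qed.

Lemma coord_others_other i j z : Forall atom z -> i <> j -> coord j (others i z) = coord j z.
Proof.
  intros F ne; induction F as [| x z ax F IH]; [reflexivity |]; unfold others in *; cbn [filter].
  destruct (nonunit_at i x) eqn:E; cbn [negb].
  - rewrite (coord_cons_out j x z); auto; apply (atom_nonunit_at_other ax E ne).
  - destruct (nonunit_at j x) eqn:E2;
      [rewrite !coord_cons_in, IH | rewrite !coord_cons_out]; auto.
Qed.

Lemma coord_replace_same i z (g : list (car (H i))) :
  Forall atom g -> coord i (others i z ++ map (embed i) g) = g.
Proof.
  intros F; rewrite coord_app, coord_others_same, coord_embed_same; auto.
  eapply Forall_impl; [| exact F]; apply atom_not_unit.
Qed.

Lemma coord_replace_other i j z (g : list (car (H i))) :
  Forall atom z -> i <> j -> coord j (others i z ++ map (embed i) g) = coord j z.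
Proof.
  intros F ne; rewrite coord_app, coord_others_other, coord_embed_other; auto; apply app_nil_r.
Qed.

Lemma perm_assoc_others_coord i z :
  Forall atom z -> perm_assoc z (others i z ++ map (embed i) (coord i z)).
Proof.
  induction 1 as [| x z ax F IH]; [constructor |]; unfold others; cbn [filter].
  destruct (nonunit_at i x) eqn:E; cbn [negb app].
  - rewrite coord_cons_in; auto; cbn [map].
    constructor; [apply assoc_atom_embed; auto | exact IH].
  - rewrite coord_cons_out; auto.
    apply (@pa_cons _ x x z []); [apply assoc_refl | exact IH].
Qed.

Lemma dist_le_embed i R (g g' : list (car (H i))) N :
  dist_le g g' N -> dist_le (R ++ map (embed i) g) (R ++ map (embed i) g') N.
Proof.
  intros [c [v [w [P1 [P2 [L1 L2]]]]]].
  exists (R ++ map (embed i) c), (map (embed i) v), (map (embed i) w).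
  rewrite <- !app_assoc, <- !map_app, !length_map; repeat split; auto;
    apply perm_assoc_app; auto using perm_assoc_refl, perm_assoc_embed.
Qed.

Lemma chain_replace a N y i (g : list (car (H i))) : factorization a y ->
  chain (a i) N (coord i y) g -> chain a N y (others i y ++ map (embed i) g).
Proof.
  intros Fy C.
  assert (Hrep : forall g, factorization (a i) g -> factorization a (others i y ++ map (embed i) g))
    by (intros; apply factorization_replace; auto).
  apply chain_trans with (others i y ++ map (embed i) (coord i y)).
  - apply chain_perm_assoc; auto using factorization_coord.
    apply perm_assoc_others_coord; eapply factorization_atoms; eauto.
  - induction C; [constructor; auto |].
    eapply chain_step; [auto | apply dist_le_embed; eauto | auto].
Qed.

Lemma coord_split i z m1 (b : car (H i)) m2 : coord i z = m1 ++ b :: m2 ->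
  exists z1 q z2, z = z1 ++ q :: z2 /\ nonunit_at i q = true /\ q i = b /\
                  coord i z1 = m1 /\ coord i z2 = m2.
Proof.
  revert m1; induction z as [| x t IH]; intros m1 E; [destruct m1; discriminate |].
  destruct (nonunit_at i x) eqn:Ex.
  - rewrite coord_cons_in in E; auto.
    destruct m1 as [| c m1]; simpl in E; inversion E as [[Eb Et]]; subst.
    + exists [], x, t; repeat split; auto.
    + destruct (IH _ Et) as [z1 [q [z2 [E1 [E2 [E3 [E4 E5]]]]]]].
      exists (x :: z1), q, z2; subst; repeat split; auto; rewrite coord_cons_in; auto.
  - rewrite coord_cons_out in E; auto.
    destruct (IH _ E) as [z1 [q [z2 [E1 [E2 [E3 [E4 E5]]]]]]].
    exists (x :: z1), q, z2; subst; repeat split; auto; rewrite coord_cons_out; auto.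
Qed.

Lemma perm_assoc_of_coords y z : Forall atom y -> Forall atom z ->
  (forall i, perm_assoc (coord i y) (coord i z)) -> perm_assoc y z.
Proof.
  intros Fy; revert z; induction Fy as [| x t ax Ft IH]; intros z Fz hP.
  - destruct z as [| p t]; [constructor | exfalso].
    inversion Fz as [| ? ? ap _]; destruct (atom_nonunit_at ap) as [i hi].
    specialize (hP i); rewrite coord_cons_in in hP; auto.
    apply perm_assoc_length in hP; discriminate.
  - destruct (atom_nonunit_at ax) as [i hi].
    pose proof (hP i) as hPi; rewrite coord_cons_in in hPi; auto.
    destruct (perm_assoc_cons_inv hPi) as [m1 [b [m2 [E1 [E2 E3]]]]].
    apply coord_split in E1 as [z1 [q [z2 [Ez [Eq1 [Eq2 [Eq3 Eq4]]]]]]]; subst z.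
    apply Forall_app in Fz as [Fz1 Fz2]; apply Forall_cons_iff in Fz2 as [aq Fz2].
    constructor.
    + apply assoc_prod; intro k; destruct (idx_eq_dec k i) as [e | ne];
        [subst k; rewrite Eq2; exact E2 |].
      apply assoc_units; [apply (proj2 (atom_nonunit_at_spec i ax hi)) |
                          apply (proj2 (atom_nonunit_at_spec i aq Eq1))]; auto.
    + apply IH; [apply Forall_app; auto |]; intro j.
      destruct (idx_eq_dec i j) as [e | ne]; [subst j; rewrite coord_app, Eq3, Eq4; exact E3 |].
      specialize (hP j).
      rewrite coord_cons_out, coord_app, coord_cons_out, <- coord_app in hP; auto;
        eapply atom_nonunit_at_other; eauto.
Qed.

(** Induction on [k]: the coordinates below [k] are moved to those of [z'] one at a time by
    [chain_replace]. *)
Lemma chain_of_coords_from a N z' k : factorization a z' -> forall y, factorization a y ->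
  (forall i, proj1_sig i < k -> chain (a i) N (coord i y) (coord i z')) ->
  (forall i, k <= proj1_sig i -> perm_assoc (coord i y) (coord i z')) -> chain a N y z'.
Proof.
  intros Fz'; induction k as [| k IH]; intros y Fy HC HP.
  - apply chain_perm_assoc; auto.
    apply perm_assoc_of_coords; eauto using factorization_atoms; intro i; apply HP; lia.
  - destruct (lt_dec k n) as [hk | hk];
      [| apply IH; [auto | intros i hi; apply HC; lia | intros [m hm] hi; simpl in *; lia]].
    set (i0 := exist (fun m => m < n) k hk : idx n).
    assert (Fy' := factorization_replace Fy (factorization_coord i0 Fz')).
    apply chain_trans with (others i0 y ++ map (embed i0) (coord i0 z')).
    { apply chain_replace; auto; apply HC; simpl; lia. }
    apply IH; auto; intros i hi; destruct (idx_eq_dec i0 i) as [e | ne].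
    + subst i; simpl in hi; lia.
    + rewrite coord_replace_other; eauto using factorization_atoms; apply HC; lia.
    + subst i; rewrite coord_replace_same; [apply perm_assoc_refl |].
      eapply factorization_atoms, factorization_coord; exact Fz'.
    + rewrite coord_replace_other; eauto using factorization_atoms; apply HP.
      assert (proj1_sig i <> k) by (intro e; apply ne, idx_eq_val; auto); lia.
Qed.

Lemma chain_of_coords a N z z' : factorization a z -> factorization a z' ->
  (forall i, chain (a i) N (coord i z) (coord i z')) -> chain a N z z'.
Proof.
  intros Fz Fz' hC; apply (chain_of_coords_from (k := n) Fz' Fz); auto.
  intros [m hm] hi; simpl in hi; lia.
Qed.

Lemma factorization_atom_support (a : car P) z p : factorization a z -> In p z ->
  exists t, nonunit_at t p = true /\ ~ is_unit (a t).
Proof.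
  intros F hp.
  destruct (atom_nonunit_at (proj1 (Forall_forall _ _) (factorization_atoms F) _ hp)) as [t ht].
  exists t; split; auto; intro hu.
  assert (hin : In (p t) (coord t z))
    by (apply (in_map (fun q : car P => q t)), filter_In; auto).
  rewrite (factorization_unit (factorization_coord t F) hu) in hin; destruct hin.
Qed.

Lemma in_L_concentrated (a : car P) i k : (forall t, t <> i -> is_unit (a t)) ->
  (in_L a k <-> in_L (a i) k).
Proof.
  intros ha; split.
  - intros [z [F L]]; exists (coord i z); split; [apply factorization_coord; auto |].
    unfold coord; rewrite length_map, forallb_filter_id; auto.
    apply forallb_forall; intros p hp.
    destruct (factorization_atom_support p F hp) as [t [ht hu]].
    destruct (idx_eq_dec t i) as [e | ne]; [subst; auto | exfalso; apply hu; auto].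
  - intros [g [F L]]; exists (map (embed i) g); rewrite length_map; split; auto.
    assert (Fe := factorization_embed F); split; [exact (proj1 Fe) |].
    eapply assoc_trans; [exact (proj2 Fe) |]; apply assoc_prod; intro t.
    destruct (idx_eq_dec i t) as [e | ne]; [subst t; rewrite embed_same; apply assoc_refl |].
    rewrite embed_other; auto; apply assoc_units; [apply unit_one | apply ha; auto].
Qed.

Lemma length_two_coords i j z : Forall atom z -> i <> j ->
  (forall p, In p z -> nonunit_at i p = true \/ nonunit_at j p = true) ->
  length z = length (coord i z) + length (coord j z).
Proof.
  intros F ne; induction F as [| x t ax F IH]; intros h; [reflexivity |].
  assert (IH' := IH (fun p hp => h p (or_intror hp))).
  destruct (h x (or_introl eq_refl)) as [hx | hx].
  - rewrite coord_cons_in, coord_cons_out; auto; [cbn [length]; lia |].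
    exact (atom_nonunit_at_other ax hx ne).
  - rewrite coord_cons_out, coord_cons_in; auto; [cbn [length]; lia |].
    exact (atom_nonunit_at_other ax hx (not_eq_sym ne)).
Qed.

Lemma in_L_atoms_apart u v i j k : atom u -> atom v -> i <> j ->
  nonunit_at i u = true -> nonunit_at j v = true -> in_L (@mul P u v) k -> k = 2.
Proof.
  intros au av ne hi hj [z [F <-]].
  destruct (atom_nonunit_at_spec i au hi) as [aui uu].
  destruct (atom_nonunit_at_spec j av hj) as [avj uv].
  rewrite (length_two_coords (factorization_atoms F) ne).
  - assert (Fi := factorization_coord i F); assert (Fj := factorization_coord j F).
    rewrite mul_at in Fi, Fj.
    rewrite (factorization_atom (a := u i)), (factorization_atom (a := v j)); auto.
    + split; [exact (proj1 Fj) |]; eapply assoc_trans; [exact (proj2 Fj) |].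
      rewrite mulC; apply assoc_mul_unit, uu; auto.
    + split; [exact (proj1 Fi) |]; eapply assoc_trans; [exact (proj2 Fi) |].
      apply assoc_mul_unit, uv; auto.
  - intros p hp; destruct (factorization_atom_support p F hp) as [t [ht hu]].
    destruct (idx_eq_dec t i); [subst; auto |].
    destruct (idx_eq_dec t j); [subst; auto |].
    exfalso; apply hu; rewrite mul_at; apply unit_mul; auto.
Qed.

Lemma catenary_le_coord a z N i :
  factorization a z -> catenary_le a N -> catenary_le (a i) N.
Proof.
  intros Fz C f f' Ff Ff'.
  assert (hc := chain_coord i (C _ _ (factorization_replace Fz Ff) (factorization_replace Fz Ff'))).
  rewrite !coord_replace_same in hc; eauto using factorization_atoms.
Qed.

Lemma catenary_le_of_coords (a : car P) N : (forall i, catenary_le (a i) N) -> catenary_le a N.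
Proof.
  intros C z z' Fz Fz'; apply chain_of_coords; auto.
  intro i; apply C; apply factorization_coord; auto.
Qed.

Lemma perm_assoc_embed_inv i (x : car (H i)) g g' : factorization x g -> factorization x g' ->
  perm_assoc (map (embed i) g) (map (embed i) g') -> perm_assoc g g'.
Proof.
  intros Fg Fg' hp; apply (perm_assoc_coord i) in hp.
  rewrite !coord_embed_same in hp; eauto using factorization_not_units.
Qed.

Lemma many_fact_embed i (x : car (H i)) : many_fact x -> many_fact (embed i x).
Proof.
  intros [g [g' [Fg [Fg' nP]]]]; exists (map (embed i) g), (map (embed i) g').
  split; [apply factorization_embed; auto |]; split; [apply factorization_embed; auto |].
  intro hp; apply nP; exact (perm_assoc_embed_inv Fg Fg' hp).
Qed.

Lemma Rset_prod d : Rset P d <-> exists i, Rset (H i) d.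
Proof.
  split.
  - intros [d2 [a [z [z' [Fz [Fz' [nP [[Dle Dmin] nC]]]]]]]].
    apply NNPP; intros hno; apply nC, chain_of_coords; auto; intro i.
    apply NNPP; intro nCi; apply hno; exists i; split; auto.
    assert (Fi := factorization_coord i Fz); assert (Fi' := factorization_coord i Fz').
    exists (a i), (coord i z), (coord i z'); do 2 (split; [assumption |]).
    split; [intro hp; apply nCi, chain_perm_assoc; auto |].
    split; [split |]; auto.
    + apply dist_le_coord; auto.
    + intros K hK; apply NNPP; intro hlt; apply nCi, chain_of_dist_le; auto.
      apply dist_le_mono with K; auto; lia.
  - intros [i [d2 [x [g [g' [Fg [Fg' [nP [[Dle Dmin] nC]]]]]]]]].
    split; auto; exists (embed i x), (map (embed i) g), (map (embed i) g').
    do 2 (split; [apply factorization_embed; auto |]).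
    split; [intro hp; apply nP; exact (perm_assoc_embed_inv Fg Fg' hp) |].
    split; [split |].
    + exact (dist_le_embed [] Dle).
    + intros K hK; apply Dmin; apply (dist_le_coord i) in hK.
      rewrite !coord_embed_same in hK; eauto using factorization_not_units.
    + intro hc; apply nC; apply (chain_coord i) in hc.
      rewrite embed_same, !coord_embed_same in hc; eauto using factorization_not_units.
Qed.

Lemma Ca_prod c : Ca P c <-> exists i, Ca (H i) c.
Proof.
  split.
  - intros [a [[z [z' [Fz [Fz' nP]]]] [C Cmin]]].
    assert (c1 : 1 <= c)
      by (destruct c; [exfalso; apply nP, (@chain_0 _ a), C; auto | lia]).
    apply NNPP; intro hno.
    enough (Cpred : catenary_le a (c - 1)) by (specialize (Cmin _ Cpred); lia).
    apply catenary_le_of_coords; intro i; apply catenary_le_pred; auto.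
    + exact (catenary_le_coord (i := i) Fz C).
    + intros hi; apply hno; exists i, (a i); exact hi.
  - intros [i [x [Mx [C Cmin]]]]; exists (embed i x); split; [apply many_fact_embed; auto |].
    split.
    + apply catenary_le_of_coords; intro j; destruct (idx_eq_dec i j) as [<- | ne].
      * rewrite embed_same; exact C.
      * apply catenary_le_unit, unit_embed_other; auto.
    + intros K CK; apply Cmin; destruct Mx as [g [_ [Fg _]]].
      rewrite <- (embed_same i x); exact (catenary_le_coord (i := i) (factorization_embed Fg) CK).
Qed.

Lemma daleth_star_prod m : daleth_star P m <-> exists i, daleth_star (H i) m.
Proof.
  rewrite daleth_starE; split.
  - intros [u [v [au [av D]]]].
    destruct (atom_nonunit_at au) as [i hi], (atom_nonunit_at av) as [j hj].
    destruct (idx_eq_dec i j) as [<- | ne].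
    + destruct (atom_nonunit_at_spec i au hi) as [aui uu].
      destruct (atom_nonunit_at_spec i av hj) as [avi uv].
      exists i, (u i), (v i); split; auto; split; auto.
      apply (daleth_of_lengths_ext (L := in_L (@mul P u v))); auto; intro k.
      apply in_L_concentrated; intros t ne; rewrite mul_at; apply unit_mul; auto.
    + exfalso; destruct D as [[k1 [k2 [hk1 [hk2 hk]]]] _]; apply hk.
      rewrite (in_L_atoms_apart au av ne hi hj hk1), (in_L_atoms_apart au av ne hi hj hk2).
      reflexivity.
  - intros [i [x [y [ax [ay D]]]]].
    exists (embed i x), (embed i y); split; [apply atom_embed; auto |].
    split; [apply atom_embed; auto |].
    apply (daleth_of_lengths_ext (L := in_L (mul x y))); auto; intro k.
    rewrite <- embed_mul, (in_L_concentrated (i := i) (embed i (mul x y)) k), embed_same;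
      [reflexivity |].
    intros t ne; apply unit_embed_other; auto.
Qed.

End Product.

Theorem lemma3p1 (n : nat) (H : idx n -> monoid) (hBF : forall i, BF (H i)) :
  (forall d, Rset (prod_monoid H) d <-> exists i, Rset (H i) d) /\
  (forall c, Ca (prod_monoid H) c <-> exists i, Ca (H i) c) /\
  (forall m, daleth_star (prod_monoid H) m <-> exists i, daleth_star (H i) m).
Proof.
  split; [apply Rset_prod |]. split; [apply Ca_prod | apply daleth_star_prod].
Qed.
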